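(* Let $\mu=(p,q,r,s)\in\mathbb{C}^4$, $\phi\in\Phi_\mu$, and $X\in\Omega_1$ with $x=\phi(X)$. The boundary of $X$ is a bi-infinite path of edges alternating $X\cap Y_n$, $X\cap Z_n$ ($n\in\mathbb{Z}$), with $Y_n\in\Omega_2$, $Z_n\in\Omega_3$, indexed so that $y_{n+1}=q-xz_n-y_n$ and $z_{n+1}=r-xy_{n+1}-z_n$ for all $n$, where $y_n=\phi(Y_n)$, $z_n=\phi(Z_n)$. For $x\neq\pm2$ put $\mathfrak y=\frac{2q-xr}{4-x^2}$, $\mathfrak z=\frac{2r-xq}{4-x^2}$, and say that $x$ is degenerate if $(px+s-x^2)(4-x^2)+q^2+r^2-qrx=0$. Then: (1) if $x\in(-2,2)$, then $|y_n|$ and $|z_n|$ remain bounded; (2) if $x=\pm2$, then $|y_n|$ and $|z_n|$ grow at most quadratically in $n$; (3) if $x\notin[-2,2]$ and $x$ is not degenerate, then $|y_n|$ and $|z_n|$ grow exponentially as $n\to+\infty$ and as $n\to-\infty$; (4) if $x\notin[-2,2]$ and $x$ is degenerate, then exactly one of the following holds: $y_n\to\mathfrak y$, $z_n\to\mathfrak z$ as $n\to-\infty$ and $|y_n|,|z_n|$ grow exponentially as $n\to+\infty$; or $y_n\to\mathfrak y$, $z_n\to\mathfrak z$ as $n\to+\infty$ and $|y_n|,|z_n|$ grow exponentially as $n\to-\infty$; or $y_n=\mathfrak y$ and $z_n=\mathfrak z$ for all $n\in\mathbb{Z}$.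
   Context: Let $\Sigma$ be a countably infinite simplicial tree, properly embedded in the plane, all of whose vertices have degree $3$. A complementary region is the closure of a connected component of the complement of $\Sigma$; $\Omega$ is the set of complementary regions, $E(\Sigma)$ the set of edges. Every edge $e$ is the intersection of exactly two regions $X,Y$, and its two endpoints lie on two further regions $Z,W$ respectively; write $e\leftrightarrow(X,Y;Z,W)$. Three regions meet at each vertex. Fix a coloring $\mathcal C:\Omega\cup E(\Sigma)\to\{1,2,3\}$ such that for every $e\leftrightarrow(X,Y;Z,W)$, $\mathcal C(e)=\mathcal C(Z)=\mathcal C(W)$ and $\mathcal C(e),\mathcal C(X),\mathcal C(Y)$ are pairwise distinct; $\Omega_i$, $E_i$ denote regions/edges of color $i$. For $\mu=(p,q,r,s)\in\mathbb{C}^4$, a $\mu$-Markoff map is $\phi:\Omega\to\mathbb{C}$ such that (i) at every vertex with regions $X\in\Omega_1,Y\in\Omega_2,Z\in\Omega_3$, $x^2+y^2+z^2+xyz=px+qy+rz+s$ where $x=\phi(X)$, etc.; (ii) for $e\in E_1$, $e\leftrightarrow(Y,Z;X,X')$: $\phi(X)+\phi(X')=p-\phi(Y)\phi(Z)$; for $e\in E_2$, $e\leftrightarrow(X,Z;Y,Y')$: $\phi(Y)+\phi(Y')=q-\phi(X)\phi(Z)$; for $e\in E_3$, $e\leftrightarrow(X,Y;Z,Z')$: $\phi(Z)+\phi(Z')=r-\phi(X)\phi(Y)$. $\Phi_\mu$ is the set of such maps. (The degeneracy condition on $x$ is the condition $AB=0$ of the paper, where $y_n=A\Lambda^{2n}+B\Lambda^{-2n}+\mathfrak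 y$ with $\Lambda=(x+\sqrt{x^2-4})/2$.) *)

From Stdlib Require Import Reals ZArith.
From Coquelicot Require Import Coquelicot.
Set Implicit Arguments.

(** Abstract incidence data of the planar trivalent tree Sigma:
    regions (complementary regions), edges and vertices, with
    - [sides e] = the two regions X,Y with e = X ∩ Y,
    - [ends e]  = the two further regions Z,W on which the endpoints of e lie
      (so e <-> (X,Y;Z,W)),
    - [at_vtx v R] : region R is one of the regions meeting at vertex v,
    - [rcol], [ecol] : the colouring C of regions and edges (values 1,2,3). *)
Record TreeData := {
  Reg : Type;
  Edg : Type;
  Vtx : Type;
  sides : Edg -> Reg * Reg;
  ends : Edg -> Reg * Reg;
  at_vtx : Vtx -> Reg -> Prop;
  rcol : Reg -> nat;
  ecol : Edg -> nat }.

Definition good_coloring (S : TreeData) : Prop :=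
  (forall R, (1 <= rcol S R <= 3)%nat) /\
  (forall e, (1 <= ecol S e <= 3)%nat /\
     ecol S e = rcol S (fst (ends S e)) /\ ecol S e = rcol S (snd (ends S e)) /\
     ecol S e <> rcol S (fst (sides S e)) /\ ecol S e <> rcol S (snd (sides S e)) /\
     rcol S (fst (sides S e)) <> rcol S (snd (sides S e))).

Definition mu_coef (p q r : C) (c : nat) : C :=
  match c with 1%nat => p | 2%nat => q | _ => r end.

Definition markoff_map (S : TreeData) (p q r s : C) (phi : Reg S -> C) : Prop :=
  (forall v X Y Z, at_vtx S v X -> at_vtx S v Y -> at_vtx S v Z ->
     rcol S X = 1%nat -> rcol S Y = 2%nat -> rcol S Z = 3%nat ->
     (phi X * phi X + phi Y * phi Y + phi Z * phi Z + phi X * phi Y * phi Z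
      = p * phi X + q * phi Y + r * phi Z + s)%C) /\
  (forall e,
     (phi (fst (ends S e)) + phi (snd (ends S e))
      = mu_coef p q r (ecol S e) - phi (fst (sides S e)) * phi (snd (sides S e)))%C).

Definition upair {T : Type} (ab : T * T) (c d : T) : Prop :=
  (fst ab = c /\ snd ab = d) \/ (fst ab = d /\ snd ab = c).

(** The boundary of X is the bi-infinite path of edges
    ... , eY n = X ∩ Y n, eZ n = X ∩ Z n, eY (n+1), ...
    eY n <-> (X, Y n; Z (n-1), Z n),  eZ n <-> (X, Z n; Y n, Y (n+1));
    vA n is the common vertex of eY n and eZ n (regions X, Y n, Z n),
    vB n is the common vertex of eZ n and eY (n+1) (regions X, Z n, Y (n+1)). *)
Definition boundary_path (S : TreeData) (X : Reg S) (Y Z : BinNums.Z -> Reg S)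
    (eY eZ : BinNums.Z -> Edg S) (vA vB : BinNums.Z -> Vtx S) : Prop :=
  forall n : BinNums.Z,
    rcol S (Y n) = 2%nat /\ rcol S (Z n) = 3%nat /\
    upair (sides S (eY n)) X (Y n) /\ upair (ends S (eY n)) (Z (n - 1)%Z) (Z n) /\
    upair (sides S (eZ n)) X (Z n) /\ upair (ends S (eZ n)) (Y n) (Y (n + 1)%Z) /\
    at_vtx S (vA n) X /\ at_vtx S (vA n) (Y n) /\ at_vtx S (vA n) (Z n) /\
    at_vtx S (vB n) X /\ at_vtx S (vB n) (Z n) /\ at_vtx S (vB n) (Y (n + 1)%Z).

Definition in_open_m2_2 (x : C) : Prop := Im x = 0%R /\ (-2 < Re x < 2)%R.
Definition in_closed_m2_2 (x : C) : Prop := Im x = 0%R /\ (-2 <= Re x <= 2)%R.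

Definition degenerate (p q r s x : C) : Prop :=
  ((p * x + s - x * x) * (4 - x * x) + q * q + r * r - q * r * x = 0)%C.

Definition yfrak (q r x : C) : C := ((2 * q - x * r) / (4 - x * x))%C.
Definition zfrak (q r x : C) : C := ((2 * r - x * q) / (4 - x * x))%C.

Definition bounded_seq (u : Z -> C) : Prop :=
  exists M : R, forall n : Z, (Cmod (u n) <= M)%R.

Definition at_most_quadratic (u : Z -> C) : Prop :=
  exists K : R, forall n : Z, (Cmod (u n) <= K * (1 + IZR n * IZR n))%R.

Definition exp_growth_nat (u : nat -> C) : Prop :=
  exists a c1 c2 : R, (1 < a)%R /\ (0 < c1)%R /\ (0 < c2)%R /\
    exists N : nat, forall k : nat, (N <= k)%nat ->
      (c1 * a ^ k <= Cmod (u k) <= c2 * a ^ k)%R.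

Definition exp_growth_plus (u : Z -> C) : Prop :=
  exp_growth_nat (fun k => u (Z.of_nat k)).
Definition exp_growth_minus (u : Z -> C) : Prop :=
  exp_growth_nat (fun k => u (- Z.of_nat k)%Z).

Definition conv_nat (u : nat -> C) (l : C) : Prop :=
  forall eps : R, (0 < eps)%R ->
    exists N : nat, forall k : nat, (N <= k)%nat -> (Cmod (u k - l) < eps)%R.

Definition conv_plus (u : Z -> C) (l : C) : Prop := conv_nat (fun k => u (Z.of_nat k)) l.
Definition conv_minus (u : Z -> C) (l : C) : Prop := conv_nat (fun k => u (- Z.of_nat k)%Z) l.

Definition exactly_one3 (P Q T : Prop) : Prop :=
  (P /\ ~ Q /\ ~ T) \/ (~ P /\ Q /\ ~ T) \/ (~ P /\ ~ Q /\ T).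

From Stdlib Require Import Reals ZArith Lra Psatz Lia.
From Coquelicot Require Import Coquelicot.

(* Along the boundary of X the edge relations are the linear recurrence
   y_{n+1} = q - x z_n - y_n, z_{n+1} = r - x y_{n+1} - z_n, whose fixed point
   is (𝔶, 𝔷) and whose linear part has eigenvalues Λ^2, Λ^-2 where
   x = Λ + 1/Λ.  For real x in (-2,2) a positive definite quadratic form in
   (y_n - 𝔶, z_n - 𝔷) is invariant; for x = ±2 the solution is a polynomial of
   degree 2 in n; otherwise y_n = 𝔶 + A Λ^{2n} + B Λ^{-2n} with |Λ| > 1, and the
   vertex relation turns the degeneracy polynomial into (x^2 - 4)^2 A B.
   Read backwards, the recurrence is the same one with (q, y) and (r, z)
   exchanged, so n -> -oo is the case n -> +oo of the exchanged data, in which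
   the roles of A and B are swapped. *)

Set Implicit Arguments.
Unset Strict Implicit.
Open Scope R_scope.

Definition vertex_relation (p q r s x y z : C) : Prop :=
  (x * x + y * y + z * z + x * y * z = p * x + q * y + r * z + s)%C.

Definition boundary_recurrence (q r x : C) (y z : Z -> C) : Prop :=
  forall n : Z,
    y (n + 1)%Z = (q - x * z n - y n)%C /\ z (n + 1)%Z = (r - x * y (n + 1)%Z - z n)%C.

Definition nat_recurrence (q r x : C) (u v : nat -> C) : Prop :=
  forall k, u (S k) = (q - x * v k - u k)%C /\ v (S k) = (r - x * u (S k) - v k)%C.

Definition real_recurrence (c d t : R) (a b : nat -> R) : Prop :=
  forall k, a (S k) = c - t * b k - a k /\ b (S k) = d - t * a (S k) - b k.

Definition bounded_nat (u : nat -> C) : Prop :=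
  exists M : R, forall k, Cmod (u k) <= M.

Definition at_most_quadratic_nat (u : nat -> C) : Prop :=
  exists K : R, forall k, Cmod (u k) <= K * (1 + INR k * INR k).

(** * Markoff maps along the boundary of a region *)

Lemma markoff_edge_relation (S : TreeData) (p q r s : C) (phi : Reg S -> C)
    (e : Edg S) (A B U V : Reg S) :
  good_coloring S -> markoff_map S p q r s phi ->
  upair (sides S e) A B -> upair (ends S e) U V ->
  (phi U + phi V = mu_coef p q r (rcol S U) - phi A * phi B)%C.
Proof.
  intros [_ Hcol] [_ Hedge] Hsides Hends.
  specialize (Hedge e). destruct (Hcol e) as (_ & Hfst & Hsnd & _).
  destruct Hends as [[Hf Hs] | [Hf Hs]]; rewrite Hf, Hs in Hedge;
  [rewrite Hf in Hfst; rewrite <- Hfst | rewrite Hs in Hsnd; rewrite <- Hsnd, Cplus_comm];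
  rewrite Hedge; destruct Hsides as [[-> ->] | [-> ->]]; ring.
Qed.

Lemma markoff_boundary_recurrence (S : TreeData) (p q r s : C) (phi : Reg S -> C)
    (X : Reg S) (Ys Zs : Z -> Reg S) (eY eZ : Z -> Edg S) (vA vB : Z -> Vtx S) :
  good_coloring S -> markoff_map S p q r s phi ->
  boundary_path S X Ys Zs eY eZ vA vB ->
  boundary_recurrence q r (phi X) (fun n => phi (Ys n)) (fun n => phi (Zs n)).
Proof.
  intros Hcol Hmk Hbp n.
  destruct (Hbp n) as (HYn & HZn & _ & _ & HsZ & HeZ & _).
  destruct (Hbp (n + 1)%Z) as (_ & _ & HsY & HeY & _).
  replace (n + 1 - 1)%Z with n in HeY by lia.
  pose proof (markoff_edge_relation Hcol Hmk HsZ HeZ) as EZ.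
  pose proof (markoff_edge_relation Hcol Hmk HsY HeY) as EY.
  rewrite HYn in EZ. rewrite HZn in EY. simpl in EZ, EY.
  split; [rewrite <- EZ | rewrite <- EY]; ring.
Qed.

Lemma markoff_boundary_vertex (S : TreeData) (p q r s : C) (phi : Reg S -> C)
    (X : Reg S) (Ys Zs : Z -> Reg S) (eY eZ : Z -> Edg S) (vA vB : Z -> Vtx S) (n : Z) :
  markoff_map S p q r s phi -> rcol S X = 1%nat ->
  boundary_path S X Ys Zs eY eZ vA vB ->
  vertex_relation p q r s (phi X) (phi (Ys n)) (phi (Zs n)).
Proof.
  intros [Hvtx _] HX Hbp.
  destruct (Hbp n) as (HY & HZ & _ & _ & _ & _ & HAX & HAY & HAZ & _).
  exact (Hvtx (vA n) X (Ys n) (Zs n) HAX HAY HAZ HX HY HZ).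
Qed.

(** * Bounded and quadratic growth for real x in [-2, 2] *)

Lemma nat_recurrence_re_im (t : R) (q r : C) (u v : nat -> C) :
  nat_recurrence q r (RtoC t) u v ->
  real_recurrence (Re q) (Re r) t (fun k => Re (u k)) (fun k => Re (v k)) /\
  real_recurrence (Im q) (Im r) t (fun k => Im (u k)) (fun k => Im (v k)).
Proof.
  intros Hrec. split; intro k; destruct (Hrec k) as [E1 E2]; rewrite E2, E1;
  destruct q, r, (u k), (v k); simpl; split; ring.
Qed.

Lemma Cmod_le_Rabs_re_im (w : C) : Cmod w <= Rabs (Re w) + Rabs (Im w).
Proof.
  replace w with (RtoC (Re w) + Ci * RtoC (Im w))%C at 1
    by (destruct w; unfold Ci, RtoC, Cplus, Cmult; simpl; f_equal; ring).
  eapply Rle_trans; [apply Cmod_triangle |].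
  rewrite Cmod_mult, Cmod_Ci, !Cmod_R. lra.
Qed.

Lemma elliptic_form_coercive (t u v : R) :
  Rabs t < 2 -> (2 - Rabs t) * (u * u + v * v) <= 2 * (u * u + v * v + t * u * v).
Proof.
  intros Ht. pose proof (Rle_0_sqr (u + v)). pose proof (Rle_0_sqr (u - v)).
  unfold Rsqr in *. destruct (Rcase_abs t) as [Hn | Hp].
  - rewrite Rabs_left by lra. nra.
  - rewrite Rabs_right by lra. nra.
Qed.

Lemma Rabs_le_of_sqr_le (u K : R) : u * u <= K -> Rabs u <= 1 + K.
Proof. intros H. apply Rabs_le. split; nra. Qed.

Lemma real_recurrence_elliptic_bounded (c d t : R) (a b : nat -> R) :
  -2 < t < 2 -> real_recurrence c d t a b ->
  exists M, forall k, Rabs (a k) <= M /\ Rabs (b k) <= M.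
Proof.
  intros Ht Hrec.
  assert (H4 : 4 - t * t <> 0) by nra.
  set (fa := (2 * c - t * d) / (4 - t * t)). set (fb := (2 * d - t * c) / (4 - t * t)).
  set (Q := fun k => (a k - fa) * (a k - fa) + (b k - fb) * (b k - fb)
                     + t * (a k - fa) * (b k - fb)).
  assert (HQ : forall k, Q k = Q 0%nat).
  { induction k as [|k IH]; [reflexivity |]. rewrite <- IH. unfold Q.
    destruct (Hrec k) as [E1 E2]. rewrite E2, E1. unfold fa, fb. field. exact H4. }
  assert (Hat : Rabs t < 2) by (apply Rabs_def1; lra).
  set (K := 2 * Q 0%nat / (2 - Rabs t)).
  assert (Hsq : forall k, (a k - fa) * (a k - fa) + (b k - fb) * (b k - fb) <= K).
  { intro k. unfold K. apply Rmult_le_reg_l with (2 - Rabs t); [lra |].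
    replace ((2 - Rabs t) * (2 * Q 0%nat / (2 - Rabs t))) with (2 * Q 0%nat) by (field; lra).
    rewrite <- (HQ k). apply elliptic_form_coercive, Hat. }
  exists (Rabs fa + Rabs fb + 1 + K). intro k. specialize (Hsq k).
  pose proof (Rle_0_sqr (a k - fa)). pose proof (Rle_0_sqr (b k - fb)). unfold Rsqr in *.
  assert (HA : Rabs (a k - fa) <= 1 + K) by (apply Rabs_le_of_sqr_le; lra).
  assert (HB : Rabs (b k - fb) <= 1 + K) by (apply Rabs_le_of_sqr_le; lra).
  pose proof (Rabs_triang (a k - fa) fa). pose proof (Rabs_triang (b k - fb) fb).
  pose proof (Rabs_pos fa). pose proof (Rabs_pos fb).
  replace (a k - fa + fa) with (a k) in * by ring.
  replace (b k - fb + fb) with (b k) in * by ring.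
  split; lra.
Qed.

Lemma real_recurrence_parabolic_closed_form (c d t : R) (a b : nat -> R) :
  (t = 2 \/ t = -2) -> real_recurrence c d t a b ->
  forall k,
    a k = a 0%nat + INR k * (c - t * b 0%nat - 2 * a 0%nat)
          + INR k * (INR k - 1) / 2 * (2 * c - t * d) /\
    b k = b 0%nat + INR k * (d - t * c + t * a 0%nat + 2 * b 0%nat)
          + INR k * (INR k - 1) / 2 * (2 * d - t * c).
Proof.
  intros Ht Hrec k. induction k as [|k [IH1 IH2]].
  - simpl. split; field.
  - destruct (Hrec k) as [E1 E2]. rewrite E2, E1, IH1, IH2, S_INR.
    destruct Ht as [-> | ->]; split; field.
Qed.

Lemma Rabs_quadratic_poly_le (c0 c1 c2 n : R) :
  0 <= n -> Rabs (c0 + n * c1 + n * (n - 1) / 2 * c2)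
            <= (Rabs c0 + Rabs c1 + Rabs c2) * (1 + n * n).
Proof.
  intros Hn.
  assert (Hlin : n <= 1 + n * n) by nra.
  assert (Hquad : Rabs (n * (n - 1) / 2) <= 1 + n * n) by (apply Rabs_le; split; nra).
  pose proof (Rabs_pos c0). pose proof (Rabs_pos c1). pose proof (Rabs_pos c2).
  eapply Rle_trans; [apply Rabs_triang |].
  eapply Rle_trans; [apply Rplus_le_compat_r, Rabs_triang |].
  rewrite !Rabs_mult, (Rabs_pos_eq n Hn).
  assert (Rabs (n * (n - 1) / 2) * Rabs c2 <= (1 + n * n) * Rabs c2)
    by (apply Rmult_le_compat_r; lra).
  assert (n * Rabs c1 <= (1 + n * n) * Rabs c1) by (apply Rmult_le_compat_r; lra).
  nra.
Qed.

Lemma real_recurrence_parabolic_quadratic (c d t : R) (a b : nat -> R) :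
  (t = 2 \/ t = -2) -> real_recurrence c d t a b ->
  exists K, forall k,
    Rabs (a k) <= K * (1 + INR k * INR k) /\ Rabs (b k) <= K * (1 + INR k * INR k).
Proof.
  intros Ht Hrec.
  set (Ka := Rabs (a 0%nat) + Rabs (c - t * b 0%nat - 2 * a 0%nat) + Rabs (2 * c - t * d)).
  set (Kb := Rabs (b 0%nat) + Rabs (d - t * c + t * a 0%nat + 2 * b 0%nat)
             + Rabs (2 * d - t * c)).
  exists (Rmax Ka Kb). intro k.
  destruct (real_recurrence_parabolic_closed_form Ht Hrec k) as [-> ->].
  assert (Hk : 0 <= INR k) by apply pos_INR.
  assert (H1 : 0 < 1 + INR k * INR k) by nra.
  split; (eapply Rle_trans; [apply Rabs_quadratic_poly_le, Hk |]);
  apply Rmult_le_compat_r; [lra | apply Rmax_l | lra | apply Rmax_r].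
Qed.

Lemma nat_recurrence_elliptic_bounded (q r x : C) (u v : nat -> C) :
  in_open_m2_2 x -> nat_recurrence q r x u v -> bounded_nat u /\ bounded_nat v.
Proof.
  destruct x as [t t']. intros [Ht' Ht] Hrec. simpl in Ht, Ht'. subst t'.
  destruct (nat_recurrence_re_im Hrec) as [HRe HIm].
  destruct (real_recurrence_elliptic_bounded Ht HRe) as [M1 H1].
  destruct (real_recurrence_elliptic_bounded Ht HIm) as [M2 H2].
  split; exists (M1 + M2); intro k; destruct (H1 k), (H2 k);
  (eapply Rle_trans; [apply Cmod_le_Rabs_re_im | simpl in *; lra]).
Qed.

Lemma nat_recurrence_parabolic_quadratic (q r x : C) (u v : nat -> C) :
  (x = RtoC 2 \/ x = RtoC (-2)) -> nat_recurrence q r x u v ->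
  at_most_quadratic_nat u /\ at_most_quadratic_nat v.
Proof.
  intros Hx Hrec.
  assert (Ht : exists t, x = RtoC t /\ (t = 2 \/ t = -2))
    by (destruct Hx as [-> | ->]; eauto).
  destruct Ht as [t [-> Ht]].
  destruct (nat_recurrence_re_im Hrec) as [HRe HIm].
  destruct (real_recurrence_parabolic_quadratic Ht HRe) as [K1 H1].
  destruct (real_recurrence_parabolic_quadratic Ht HIm) as [K2 H2].
  split; exists (K1 + K2); intro k; destruct (H1 k), (H2 k);
  (eapply Rle_trans; [apply Cmod_le_Rabs_re_im | simpl in *; lra]).
Qed.

Lemma Cmod_add_geometric_le (a w c : C) (k : nat) :
  Cmod w <= 1 -> Cmod (a + w ^ k * c) <= Cmod a + Cmod c.
Proof.
  intros Hw. eapply Rle_trans; [apply Cmod_triangle |].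
  rewrite Cmod_mult, Cmod_pow. apply Rplus_le_compat_l.
  pose proof (Cmod_ge_0 w). pose proof (Cmod_ge_0 c).
  assert (Cmod w ^ k <= 1) by (rewrite <- (pow1 k); apply pow_incr; lra).
  assert (0 <= Cmod w ^ k) by (apply pow_le; lra).
  nra.
Qed.

Lemma exp_growth_nat_geometric (u : nat -> C) (w c : C) (M : R) :
  1 < Cmod w -> c <> 0%C -> (forall k, Cmod (u k - w ^ k * c) <= M) -> exp_growth_nat u.
Proof.
  intros Hw Hc Hu.
  set (rho := Cmod w). set (m := Cmod c).
  assert (Hm : 0 < m) by (apply Cmod_gt_0, Hc).
  destruct (Pow_x_infinity rho ltac:(rewrite Rabs_pos_eq; unfold rho; lra) (2 * M / m))
    as [N HN].
  exists rho, (m / 2), (m + Rabs M).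
  split; [exact Hw |]. split; [lra |]. split; [pose proof (Rabs_pos M); lra |].
  exists N. intros k Hk. specialize (HN k Hk). specialize (Hu k).
  assert (Hpow : 1 <= rho ^ k) by (apply pow_R1_Rle; unfold rho; lra).
  rewrite Rabs_pos_eq in HN by lra. apply Rge_le in HN.
  assert (Hgeo : Cmod (w ^ k * c) = rho ^ k * m) by (rewrite Cmod_mult, Cmod_pow; reflexivity).
  pose proof (Cmod_triangle (u k - w ^ k * c) (w ^ k * c)) as Hup.
  pose proof (Cmod_triangle (w ^ k * c - u k) (u k)) as Hlow.
  replace (u k - w ^ k * c + w ^ k * c)%C with (u k) in Hup by ring.
  replace (w ^ k * c - u k + u k)%C with (w ^ k * c)%C in Hlow by ring.
  replace (w ^ k * c - u k)%C with (- (u k - w ^ k * c))%C in Hlow by ring.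
  rewrite Cmod_opp in Hlow.
  assert (Hbig : 2 * M <= rho ^ k * m).
  { apply Rmult_le_compat_r with (r := m) in HN; [| lra].
    replace (2 * M / m * m) with (2 * M) in HN by (field; lra). lra. }
  pose proof (Rle_abs M).
  split; nra.
Qed.

Lemma conv_nat_geometric (u : nat -> C) (w c l : C) :
  Cmod w < 1 -> (forall k, u k = (l + w ^ k * c)%C) -> conv_nat u l.
Proof.
  intros Hw Hu eps Heps.
  pose proof (Cmod_ge_0 w) as Hw0. pose proof (Cmod_ge_0 c) as Hc0.
  destruct (pow_lt_1_zero (Cmod w) ltac:(rewrite Rabs_pos_eq; lra) (eps / (Cmod c + 1)))
    as [N HN]; [apply Rdiv_lt_0_compat; lra |].
  exists N. intros k Hk. specialize (HN k Hk).
  rewrite Rabs_pos_eq in HN by (apply pow_le; lra).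
  rewrite Hu. replace (l + w ^ k * c - l)%C with (w ^ k * c)%C by ring.
  rewrite Cmod_mult, Cmod_pow.
  apply Rmult_lt_compat_r with (r := Cmod c + 1) in HN; [| lra].
  replace (eps / (Cmod c + 1) * (Cmod c + 1)) with eps in HN by (field; lra).
  assert (0 <= Cmod w ^ k) by (apply pow_le; lra).
  nra.
Qed.

Lemma conv_nat_const (u : nat -> C) (l : C) : (forall k, u k = l) -> conv_nat u l.
Proof.
  intros Hu eps Heps. exists 0%nat. intros k _.
  rewrite Hu. replace (l - l)%C with (RtoC 0) by ring. rewrite Cmod_0. exact Heps.
Qed.

Lemma exp_growth_not_conv (u : nat -> C) (l : C) : exp_growth_nat u -> ~ conv_nat u l.
Proof.
  intros (a & c1 & c2 & Ha & Hc1 & _ & N & HN) Hconv.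
  destruct (Hconv 1 ltac:(lra)) as [N1 HN1].
  destruct (Pow_x_infinity a ltac:(rewrite Rabs_pos_eq; lra) ((2 + Cmod l) / c1))
    as [N2 HN2].
  set (k := Nat.max N (Nat.max N1 N2)).
  specialize (HN k ltac:(lia)). specialize (HN1 k ltac:(lia)). specialize (HN2 k ltac:(lia)).
  rewrite Rabs_pos_eq in HN2 by (apply pow_le; lra). apply Rge_le in HN2.
  pose proof (Cmod_triangle (u k - l) l) as Htri.
  replace (u k - l + l)%C with (u k) in Htri by ring.
  apply Rmult_le_compat_r with (r := c1) in HN2; [| lra].
  replace ((2 + Cmod l) / c1 * c1) with (2 + Cmod l) in HN2 by (field; lra).
  lra.
Qed.

(** * The hyperbolic case: x outside [-2, 2] *)

Lemma Cmod_gt_1_neq_0 (L : C) : 1 < Cmod L -> L <> 0%C.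
Proof. intros H ->. rewrite Cmod_0 in H. lra. Qed.

Lemma Cmod_gt_1_sqr_neq_1 (L : C) : 1 < Cmod L -> (L * L - 1 <> 0)%C.
Proof.
  intros HL E. assert (E' : (L * L)%C = RtoC 1) by (rewrite <- (Cplus_0_l 1), <- E; ring).
  apply (f_equal Cmod) in E'. rewrite Cmod_mult, Cmod_1 in E'. nra.
Qed.

Lemma joukowski_4_minus_sqr_neq_0 (L : C) : 1 < Cmod L -> (4 - (L + / L) * (L + / L) <> 0)%C.
Proof.
  intros HL E. apply (Cmod_gt_1_sqr_neq_1 HL).
  assert (HL0 := Cmod_gt_1_neq_0 HL).
  assert (E' : ((L * L - 1) * (L * L - 1) = 0)%C).
  { replace ((L * L - 1) * (L * L - 1))%C
      with (- (L * L) * (4 - (L + / L) * (L + / L)))%C by (field; exact HL0).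
    rewrite E. ring. }
  destruct (Ceq_dec (L * L - 1) 0) as [| Hn]; [assumption |].
  exfalso. exact (Cmult_neq_0 _ _ Hn Hn E').
Qed.

Lemma yfrak_zfrak_fixed_point (q r x : C) :
  (4 - x * x <> 0)%C ->
  q = (yfrak q r x + x * zfrak q r x + yfrak q r x)%C /\
  r = (zfrak q r x + x * yfrak q r x + zfrak q r x)%C.
Proof. intros H. unfold yfrak, zfrak. split; field; exact H. Qed.

Lemma Csqrt_exists (w : C) : exists s : C, (s * s)%C = w.
Proof.
  destruct w as [a b].
  set (m := sqrt (a * a + b * b)).
  assert (Hmm : m * m = a * a + b * b) by (apply sqrt_sqrt; nra).
  assert (Hm : 0 <= m) by apply sqrt_pos.
  assert (Ha : - m <= a <= m) by (split; nra).
  set (u := sqrt ((m + a) / 2)). set (v := sqrt ((m - a) / 2)).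
  assert (Hu : u * u = (m + a) / 2) by (apply sqrt_sqrt; lra).
  assert (Hv : v * v = (m - a) / 2) by (apply sqrt_sqrt; lra).
  assert (Huv : (u * v) * (u * v) = b * b / 4)
    by (replace ((u * v) * (u * v)) with ((u * u) * (v * v)) by ring; rewrite Hu, Hv; nra).
  assert (Huv0 : 0 <= u * v) by (apply Rmult_le_pos; apply sqrt_pos).
  destruct (Rle_or_lt 0 b) as [Hb | Hb].
  - exists (u, v). unfold Cmult; simpl. f_equal; [| assert (u * v = b / 2) by nra]; nra.
  - exists (u, - v). unfold Cmult; simpl. f_equal; [| assert (u * v = - b / 2) by nra]; nra.
Qed.

Lemma unit_circle_joukowski (L : C) : Cmod L = 1 -> in_closed_m2_2 (L + / L)%C.
Proof.
  destruct L as [a b]. intros Hm.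
  assert (H2 : a * a + b * b = 1).
  { pose proof (Cmod2_alt (a, b)) as E. rewrite Hm in E. simpl in E. nra. }
  unfold in_closed_m2_2, Cinv, Cplus. simpl.
  replace (a * (a * 1) + b * (b * 1)) with 1 by lra. split; [field | nra].
Qed.

Lemma joukowski_preimage (x : C) :
  ~ in_closed_m2_2 x -> exists L : C, 1 < Cmod L /\ x = (L + / L)%C.
Proof.
  intros Hx. destruct (Csqrt_exists (x * x - 4)%C) as [s Hs].
  set (L := ((x + s) / 2)%C).
  assert (HLL : (L * ((x - s) / 2) = 1)%C).
  { unfold L. replace ((x + s) / 2 * ((x - s) / 2))%C with ((x * x - s * s) / 4)%C by field.
    rewrite Hs. field. }
  assert (HL : L <> 0%C) by (intros E; rewrite E, Cmult_0_l in HLL; exact (C1_nz (eq_sym HLL))).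
  assert (Hinv : (/ L = (x - s) / 2)%C)
    by (rewrite <- (Cmult_1_l (/ L)), <- HLL; field; exact HL).
  assert (HxL : x = (L + / L)%C) by (rewrite Hinv; unfold L; field).
  destruct (Rtotal_order (Cmod L) 1) as [Hlt | [Heq | Hgt]].
  - exists (/ L)%C. split.
    + rewrite Cmod_inv by exact HL.
      rewrite <- Rinv_1. apply Rinv_lt_contravar; [| exact Hlt].
      rewrite Rmult_1_r. apply Cmod_gt_0, HL.
    + rewrite HxL. field. exact HL.
  - exfalso. apply Hx. rewrite HxL. apply unit_circle_joukowski, Heq.
  - exists L. split; assumption.
Qed.

Lemma hyperbolic_modes_exist (L yf zf y0 z0 : C) :
  1 < Cmod L -> exists A B : C, y0 = (yf + A + B)%C /\ z0 = (zf - L * A - / L * B)%C.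
Proof.
  intros HL. assert (HL0 := Cmod_gt_1_neq_0 HL). assert (HL1 := Cmod_gt_1_sqr_neq_1 HL).
  set (B := (L * (L * (y0 - yf) + (z0 - zf)) / (L * L - 1))%C).
  exists (y0 - yf - B)%C, B. unfold B. split; field; auto.
Qed.

Lemma degenerate_iff_modes (p q r s L yf zf A B : C) :
  1 < Cmod L ->
  q = (yf + (L + / L) * zf + yf)%C -> r = (zf + (L + / L) * yf + zf)%C ->
  vertex_relation p q r s (L + / L) (yf + A + B) (zf - L * A - / L * B) ->
  (degenerate p q r s (L + / L) <-> (A * B = 0)%C).
Proof.
  intros HL -> -> Hv. unfold vertex_relation in Hv.
  assert (HL0 := Cmod_gt_1_neq_0 HL).
  set (x := (L + / L)%C) in *. set (y0 := (yf + A + B)%C) in *.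
  set (z0 := (zf - L * A - / L * B)%C) in *.
  assert (Hs : s = (x * x + y0 * y0 + z0 * z0 + x * y0 * z0
                    - (p * x + (yf + x * zf + yf) * y0 + (zf + x * yf + zf) * z0))%C)
    by (rewrite Hv; ring).
  assert (HdL : (L - / L <> 0)%C).
  { intros E. apply (Cmod_gt_1_sqr_neq_1 HL).
    replace (L * L - 1)%C with (L * (L - / L))%C by (field; exact HL0). rewrite E. ring. }
  transitivity ((L - / L) * (L - / L) * (L - / L) * (L - / L) * (A * B) = 0)%C.
  { unfold degenerate. subst s x y0 z0. split; intros E; rewrite <- E; field; exact HL0. }
  split; [| intros ->; ring].
  intros E. destruct (Ceq_dec (A * B) 0) as [| HAB]; [assumption |].
  exfalso. revert E. apply Cmult_neq_0; [repeat apply Cmult_neq_0; exact HdL | exact HAB].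
Qed.

Section HyperbolicNat.

Variables (q r L yf zf A B : C) (u v : nat -> C).
Hypothesis HL : 1 < Cmod L.
Hypothesis Hq : q = (yf + (L + / L) * zf + yf)%C.
Hypothesis Hr : r = (zf + (L + / L) * yf + zf)%C.
Hypothesis Hrec : nat_recurrence q r (L + / L) u v.
Hypothesis Hu0 : u 0%nat = (yf + A + B)%C.
Hypothesis Hv0 : v 0%nat = (zf - L * A - / L * B)%C.

Lemma hyperbolic_closed_form (k : nat) :
  u k = (yf + (L * L) ^ k * A + (/ (L * L)) ^ k * B)%C /\
  v k = (zf + (L * L) ^ k * (- L * A) + (/ (L * L)) ^ k * (- / L * B))%C.
Proof.
  assert (HL0 := Cmod_gt_1_neq_0 HL).
  induction k as [|k [IH1 IH2]].
  - simpl. rewrite Hu0, Hv0. split; ring.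
  - destruct (Hrec k) as [E1 E2]. rewrite E2, E1, IH1, IH2, Hq, Hr, !Cpow_S.
    split; field; exact HL0.
Qed.

Lemma Cmod_inv_sqr_lt_1 : Cmod (/ (L * L)) < 1.
Proof.
  assert (HL0 := Cmod_gt_1_neq_0 HL).
  rewrite Cmod_inv, Cmod_mult by (apply Cmult_neq_0; exact HL0).
  rewrite <- Rinv_1. apply Rinv_lt_contravar; nra.
Qed.

Lemma hyperbolic_growth : A <> 0%C -> exp_growth_nat u /\ exp_growth_nat v.
Proof.
  intros HA. assert (HL0 := Cmod_gt_1_neq_0 HL).
  assert (Hw : 1 < Cmod (L * L)) by (rewrite Cmod_mult; nra).
  assert (Hw' := Rlt_le _ _ Cmod_inv_sqr_lt_1).
  split.
  - apply exp_growth_nat_geometric with (L * L)%C A (Cmod yf + Cmod B); [exact Hw | exact HA |].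
    intro k. rewrite (proj1 (hyperbolic_closed_form k)).
    replace (_ - _)%C with (yf + (/ (L * L)) ^ k * B)%C by ring.
    apply Cmod_add_geometric_le, Hw'.
  - apply exp_growth_nat_geometric with (L * L)%C (- L * A)%C (Cmod zf + Cmod (- / L * B));
      [exact Hw | apply Cmult_neq_0; [| exact HA] |].
    + intros E. apply HL0. replace L with (- - L)%C by ring. rewrite E. apply Copp_0.
    + intro k. rewrite (proj2 (hyperbolic_closed_form k)).
      replace (_ - _)%C with (zf + (/ (L * L)) ^ k * (- / L * B))%C by ring.
      apply Cmod_add_geometric_le, Hw'.
Qed.

Lemma hyperbolic_convergence : A = 0%C -> conv_nat u yf /\ conv_nat v zf.
Proof.
  intros HA. split.
  - apply conv_nat_geometric with (/ (L * L))%C B; [exact Cmod_inv_sqr_lt_1 |].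
    intro k. rewrite (proj1 (hyperbolic_closed_form k)), HA. ring.
  - apply conv_nat_geometric with (/ (L * L))%C (- / L * B)%C; [exact Cmod_inv_sqr_lt_1 |].
    intro k. rewrite (proj2 (hyperbolic_closed_form k)), HA. ring.
Qed.

Lemma hyperbolic_constant : A = 0%C -> B = 0%C -> forall k, u k = yf /\ v k = zf.
Proof.
  intros HA HB k. rewrite (proj1 (hyperbolic_closed_form k)), (proj2 (hyperbolic_closed_form k)),
    HA, HB. split; ring.
Qed.

End HyperbolicNat.

Lemma Z_of_nat_cases (P : Z -> Prop) :
  (forall k, P (Z.of_nat k)) -> (forall k, P (- Z.of_nat k)%Z) -> forall n, P n.
Proof.
  intros Hpos Hneg n. destruct (Z_le_gt_dec 0 n).
  - rewrite <- (Z2Nat.id n) by lia. apply Hpos.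
  - replace n with (- Z.of_nat (Z.to_nat (- n)))%Z by lia. apply Hneg.
Qed.

Lemma bounded_seq_of_nat (u : Z -> C) :
  bounded_nat (fun k => u (Z.of_nat k)) -> bounded_nat (fun k => u (- Z.of_nat k)%Z) ->
  bounded_seq u.
Proof.
  intros [M1 H1] [M2 H2]. exists (Rmax M1 M2).
  apply Z_of_nat_cases; intro k;
  [eapply Rle_trans; [apply H1 | apply Rmax_l] | eapply Rle_trans; [apply H2 | apply Rmax_r]].
Qed.

Lemma at_most_quadratic_of_nat (u : Z -> C) :
  at_most_quadratic_nat (fun k => u (Z.of_nat k)) ->
  at_most_quadratic_nat (fun k => u (- Z.of_nat k)%Z) ->
  at_most_quadratic u.
Proof.
  intros [K1 H1] [K2 H2]. exists (Rmax K1 K2).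
  apply Z_of_nat_cases; intro k; [rewrite <- INR_IZR_INZ | rewrite opp_IZR, <- INR_IZR_INZ];
  (assert (Hk : 0 < 1 + INR k * INR k) by (pose proof (pos_INR k); nra)).
  - eapply Rle_trans; [apply H1 |]. apply Rmult_le_compat_r; [lra | apply Rmax_l].
  - replace (- INR k * - INR k) with (INR k * INR k) by ring.
    eapply Rle_trans; [apply H2 |]. apply Rmult_le_compat_r; [lra | apply Rmax_r].
Qed.

Lemma exactly_one3_intro (P Q T : Prop) :
  (P -> ~ Q) -> (P -> ~ T) -> (Q -> ~ T) -> P \/ Q \/ T -> exactly_one3 P Q T.
Proof. unfold exactly_one3. tauto. Qed.

Section BoundaryRecurrence.

Variables (q r x : C) (y z : Z -> C).
Hypothesis Hrec : boundary_recurrence q r x y z.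

Lemma boundary_forward :
  nat_recurrence q r x (fun k => y (Z.of_nat k)) (fun k => z (Z.of_nat k)).
Proof. intro k. rewrite Nat2Z.inj_succ, <- Z.add_1_r. apply Hrec. Qed.

Lemma boundary_backward :
  nat_recurrence r q x (fun k => z (- Z.of_nat k)%Z) (fun k => y (- Z.of_nat k)%Z).
Proof.
  intro k. destruct (Hrec (- Z.of_nat (S k))%Z) as [E1 E2].
  replace (- Z.of_nat (S k) + 1)%Z with (- Z.of_nat k)%Z in E1, E2 by lia.
  split; [rewrite E2 | rewrite E1]; ring.
Qed.

Lemma boundary_elliptic_bounded : in_open_m2_2 x -> bounded_seq y /\ bounded_seq z.
Proof.
  intros Hx.
  destruct (nat_recurrence_elliptic_bounded Hx boundary_forward) as [Hy Hz].
  destruct (nat_recurrence_elliptic_bounded Hx boundary_backward) as [Hz' Hy'].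
  split; apply bounded_seq_of_nat; assumption.
Qed.

Lemma boundary_parabolic_quadratic :
  (x = RtoC 2 \/ x = RtoC (-2)) -> at_most_quadratic y /\ at_most_quadratic z.
Proof.
  intros Hx.
  destruct (nat_recurrence_parabolic_quadratic Hx boundary_forward) as [Hy Hz].
  destruct (nat_recurrence_parabolic_quadratic Hx boundary_backward) as [Hz' Hy'].
  split; apply at_most_quadratic_of_nat; assumption.
Qed.

Variables (L A B : C).
Hypothesis HL : 1 < Cmod L.
Hypothesis Hx : x = (L + / L)%C.
Hypothesis Hy0 : y 0%Z = (yfrak q r x + A + B)%C.
Hypothesis Hz0 : z 0%Z = (zfrak q r x - L * A - / L * B)%C.

Lemma boundary_fixed_point :
  q = (yfrak q r x + (L + / L) * zfrak q r x + yfrak q r x)%C /\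
  r = (zfrak q r x + (L + / L) * yfrak q r x + zfrak q r x)%C.
Proof.
  rewrite <- Hx. apply yfrak_zfrak_fixed_point.
  rewrite Hx. apply joukowski_4_minus_sqr_neq_0, HL.
Qed.

Lemma boundary_hyperbolic_plus :
  (A <> 0%C -> exp_growth_plus y /\ exp_growth_plus z) /\
  (A = 0%C -> conv_plus y (yfrak q r x) /\ conv_plus z (zfrak q r x)).
Proof.
  destruct boundary_fixed_point as [Hq Hr].
  assert (Hfwd := boundary_forward). rewrite Hx in Hfwd.
  split; [apply (hyperbolic_growth HL Hq Hr Hfwd Hy0 Hz0)
         | apply (hyperbolic_convergence HL Hq Hr Hfwd Hy0 Hz0)].
Qed.

(* Backwards, z takes the role of y, and the modes are A' = - B / L, B' = - L A. *)
Lemma boundary_hyperbolic_minus :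
  (B <> 0%C -> exp_growth_minus y /\ exp_growth_minus z) /\
  (B = 0%C -> conv_minus y (yfrak q r x) /\ conv_minus z (zfrak q r x)).
Proof.
  destruct boundary_fixed_point as [Hq Hr].
  assert (HL0 := Cmod_gt_1_neq_0 HL).
  assert (Hbwd := boundary_backward). rewrite Hx in Hbwd.
  assert (Hz0' : z (- Z.of_nat 0)%Z = (zfrak q r x + - / L * B + - L * A)%C)
    by (simpl; rewrite Hz0; ring).
  assert (Hy0' : y (- Z.of_nat 0)%Z
                 = (yfrak q r x - L * (- / L * B) - / L * (- L * A))%C)
    by (simpl; rewrite Hy0; field; exact HL0).
  split; intros HB.
  - assert (HA' : (- / L * B <> 0)%C).
    { intros E. apply HB. rewrite <- (Cmult_1_l B), <- (Cinv_r L HL0).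
      replace (L * / L * B)%C with (- L * (- / L * B))%C by ring. rewrite E. ring. }
    destruct (hyperbolic_growth HL Hr Hq Hbwd Hz0' Hy0' HA'). split; assumption.
  - assert (HA' : (- / L * B = 0)%C) by (rewrite HB; ring).
    destruct (hyperbolic_convergence HL Hr Hq Hbwd Hz0' Hy0' HA'). split; assumption.
Qed.

Lemma boundary_hyperbolic_constant :
  A = 0%C -> B = 0%C -> forall n, y n = yfrak q r x /\ z n = zfrak q r x.
Proof.
  intros HA HB.
  destruct boundary_fixed_point as [Hq Hr].
  assert (Hfwd := boundary_forward). rewrite Hx in Hfwd.
  assert (Hbwd := boundary_backward). rewrite Hx in Hbwd.
  assert (Hz0' : z (- Z.of_nat 0)%Z = (zfrak q r x + 0 + 0)%C)
    by (simpl; rewrite Hz0, HA, HB; ring).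
  assert (Hy0' : y (- Z.of_nat 0)%Z = (yfrak q r x - L * 0 - / L * 0)%C)
    by (simpl; rewrite Hy0, HA, HB; ring).
  apply Z_of_nat_cases; intro k.
  - exact (hyperbolic_constant HL Hq Hr Hfwd Hy0 Hz0 HA HB k).
  - destruct (hyperbolic_constant HL Hr Hq Hbwd Hz0' Hy0' eq_refl eq_refl k).
    split; assumption.
Qed.

Lemma boundary_hyperbolic_growth :
  A <> 0%C -> B <> 0%C ->
  exp_growth_plus y /\ exp_growth_plus z /\ exp_growth_minus y /\ exp_growth_minus z.
Proof.
  intros HA HB.
  destruct (proj1 boundary_hyperbolic_plus HA), (proj1 boundary_hyperbolic_minus HB).
  repeat split; assumption.
Qed.

Lemma boundary_hyperbolic_trichotomy :
  (A * B = 0)%C ->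
  exactly_one3
    (conv_minus y (yfrak q r x) /\ conv_minus z (zfrak q r x) /\
     exp_growth_plus y /\ exp_growth_plus z)
    (conv_plus y (yfrak q r x) /\ conv_plus z (zfrak q r x) /\
     exp_growth_minus y /\ exp_growth_minus z)
    (forall n : Z, y n = yfrak q r x /\ z n = zfrak q r x).
Proof.
  intros HAB.
  destruct boundary_hyperbolic_plus as [Gp Cp]. destruct boundary_hyperbolic_minus as [Gm Cm].
  apply exactly_one3_intro.
  - intros (_ & _ & Hgp & _) (Hcp & _). exact (exp_growth_not_conv Hgp Hcp).
  - intros (_ & _ & Hgp & _) Hc.
    apply (exp_growth_not_conv (l := yfrak q r x) Hgp). apply conv_nat_const. intro k. apply Hc.
  - intros (_ & _ & Hgm & _) Hc.
    apply (exp_growth_not_conv (l := yfrak q r x) Hgm). apply conv_nat_const. intro k. apply Hc.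
  - destruct (Ceq_dec A 0) as [HA | HA]; destruct (Ceq_dec B 0) as [HB | HB].
    + right; right. exact (boundary_hyperbolic_constant HA HB).
    + right; left. destruct (Cp HA), (Gm HB). repeat split; assumption.
    + left. destruct (Gp HA), (Cm HB). repeat split; assumption.
    + exfalso. exact (Cmult_neq_0 _ _ HA HB HAB).
Qed.

End BoundaryRecurrence.

Lemma hyperbolic_modes (p q r s x y0 z0 : C) :
  ~ in_closed_m2_2 x -> vertex_relation p q r s x y0 z0 ->
  exists L A B : C, 1 < Cmod L /\ x = (L + / L)%C /\
    y0 = (yfrak q r x + A + B)%C /\ z0 = (zfrak q r x - L * A - / L * B)%C /\
    (degenerate p q r s x <-> (A * B = 0)%C).
Proof.
  intros Hx Hv.
  destruct (joukowski_preimage Hx) as (L & HL & ->).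
  destruct (yfrak_zfrak_fixed_point q r (joukowski_4_minus_sqr_neq_0 HL)) as [Hq Hr].
  destruct (hyperbolic_modes_exist (yfrak q r (L + / L)) (zfrak q r (L + / L)) y0 z0 HL)
    as (A & B & Hy0 & Hz0).
  exists L, A, B. repeat split; try assumption;
  apply (degenerate_iff_modes HL Hq Hr); rewrite <- Hy0, <- Hz0; exact Hv.
Qed.

Theorem lemma3p8 (S : TreeData) (p q r s : C) (phi : Reg S -> C)
    (X : Reg S) (Ys Zs : Z -> Reg S) (eY eZ : Z -> Edg S) (vA vB : Z -> Vtx S) :
  good_coloring S ->
  markoff_map S p q r s phi ->
  rcol S X = 1%nat ->
  boundary_path S X Ys Zs eY eZ vA vB ->
  let x := phi X in
  let y := fun n : Z => phi (Ys n) in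
  let z := fun n : Z => phi (Zs n) in
  (in_open_m2_2 x -> bounded_seq y /\ bounded_seq z) /\
  (x = RtoC 2 \/ x = RtoC (-2) -> at_most_quadratic y /\ at_most_quadratic z) /\
  (~ in_closed_m2_2 x -> ~ degenerate p q r s x ->
     exp_growth_plus y /\ exp_growth_plus z /\
     exp_growth_minus y /\ exp_growth_minus z) /\
  (~ in_closed_m2_2 x -> degenerate p q r s x ->
     exactly_one3
       (conv_minus y (yfrak q r x) /\ conv_minus z (zfrak q r x) /\
        exp_growth_plus y /\ exp_growth_plus z)
       (conv_plus y (yfrak q r x) /\ conv_plus z (zfrak q r x) /\
        exp_growth_minus y /\ exp_growth_minus z)
       (forall n : Z, y n = yfrak q r x /\ z n = zfrak q r x)).
Proof.
  intros Hcol Hmk HX Hbp x y z.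
  assert (Hrec := markoff_boundary_recurrence Hcol Hmk Hbp).
  assert (Hv := markoff_boundary_vertex 0 Hmk HX Hbp).
  split; [exact (boundary_elliptic_bounded Hrec) |].
  split; [exact (boundary_parabolic_quadratic Hrec) |].
  split; intros Hnc Hdeg;
  destruct (hyperbolic_modes Hnc Hv) as (L & A & B & HL & Hx & Hy0 & Hz0 & Hmodes).
  - apply (boundary_hyperbolic_growth Hrec HL Hx Hy0 Hz0);
    intros E; apply Hdeg, Hmodes; rewrite E; ring.
  - exact (boundary_hyperbolic_trichotomy Hrec HL Hx Hy0 Hz0 (proj1 Hmodes Hdeg)).
Qed.
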